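(* On the good event $\mathcal E$ (defined in the context), for every integer $k$ with $C''\le k\le K$ and every policy $\pi$, $$\hat V_1^\pi(\mu;\tilde c^k,\hat P^k)\le V_1^\pi(\mu;c,P).$$
   Context: Episodic constrained MDP. $\mathcal S,\mathcal A$ finite, $H\ge1$ integer. For each $h\in[H]$, $(s,a)$: unknown transition distribution $P_h(\cdot\mid s,a)$, unknown mean reward $r_h(s,a)\in[0,1]$, unknown mean cost $c_h(s,a)\in[0,1]$. Known initial distribution $\mu$, threshold $\tau\in(0,H]$. Policies are randomized Markov. $V_h^\pi(s;g,P'):=\mathbb E_{P',\pi}[\sum_{t=h}^Hg_t(S_t,A_t)\mid S_h=s]$, $V_1^\pi(\mu;g,P'):=\mathbb E_{S_1\sim\mu}V_1^\pi(S_1;g,P')$. There exists a policy $\pi^0$ with $V_1^{\pi^0}(\mu;c,P)=c^0<\tau$, $c^0$ known. Interaction over $K$ episodes: in episode $k$, $\pi^k$ is $\mathcal F_{k-1}$-measurable; $S_1^k\sim\mu$, $A_h^k\sim\pi_h^k(\cdot\mid S_h^k)$, observed $R_h^k=r_h(S_h^k,A_h^k)+\text{noise}$, $C_h^k=c_h(S_h^k,A_h^k)+\text{noise}$, $S_{h+1}^k\sim P_h(\cdot\mid S_h^k,A_h^k)$; $\mathcal F_k$ generated by all observations of episodes $1..k$; noises conditionally independent, zero mean, $\mathbb E[e^{\lambda\xi}\mid\mathcal F_{k-1}]\le e^{\lambda^2/4}$ for all real $\lambda$. Here the policies are those of OptPess-PrimalDual: $\lambda^1=0$, $\pi^k\in\arg\max_\pi\hat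 V_1^\pi(\mu;\tilde r^k,\hat P^k)-\frac{\lambda^k}{\eta^k}(\hat V_1^\pi(\mu;\tilde c^k,\hat P^k)-\tau)$, $\lambda^{k+1}=(\lambda^k+\hat V_1^{\pi^k}(\mu;\tilde c^k,\hat P^k)+\epsilon_k-\tau)_+$, $\eta^k=(\tau-c^0)H\sqrt k$. Estimates: $N_h^k(s,a)$ = visits of $(s,a)$ at step $h$ in episodes $1..k-1$; $\hat P_h^k,\hat r_h^k,\hat c_h^k$ empirical transition frequencies and means (denominator $N_h^k(s,a)\vee1$); $\delta\in(0,1)$, $Z:=\log(16|\mathcal S|^2|\mathcal A|HK/\delta)$, $\beta_h^k(s,a):=\sqrt{Z/(N_h^k(s,a)\vee1)}$; $\tilde r_h^k:=\hat r_h^k+(1+H|\mathcal S|)\beta_h^k$, $\tilde c_h^k:=\hat c_h^k-(1+H|\mathcal S|)\beta_h^k$, $\underline c_h^k:=\hat c_h^k+(1+H|\mathcal S|)\beta_h^k$; $\hat V_1^\pi(\mu;\tilde r^k,\hat P^k):=\min\{H,V_1^\pi(\mu;\tilde r^k,\hat P^k)\}$, $\hat V_1^\pi(\mu;\tilde c^k,\hat P^k):=\max\{0,V_1^\pi(\mu;\tilde c^k,\hat P^k)\}$. $\delta'=\delta/(16|\mathcal S|^2|\mathcal A|H)$, $\epsilon_k=5H^2\sqrt{|\mathcal S|^3|\mathcal A|}(\log\frac{k}{\delta'}+1)/\sqrt{k\log\frac{k}{\delta'}}$, and $C''$ is the smallest positive integer such that $\epsilon_k\le(\tau-c^0)/2$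 for all $k\ge C''$. Good event: with $q^{\pi^k}(s,a,h):=\mathbb P(S_h^k=s,A_h^k=a\mid\mathcal F_{k-1})$, for events $\mathcal G_k\in\mathcal F_{k-1}$ and $\delta_0$, $\mathcal E_{\mathcal G}(\delta_0)$ is the event that for all $K'\in[K]$, with $K'_{\mathcal G}=\sum_{k\le K'}\mathbb 1(\mathcal G_k)$: $\sum_{k\le K'}\sum_h\sum_{s,a}\frac{\mathbb 1(\mathcal G_k)q^{\pi^k}(s,a,h)}{N_h^k(s,a)\vee1}\le4H|\mathcal S||\mathcal A|+2H|\mathcal S||\mathcal A|\ln K'_{\mathcal G}+4\ln\frac{2HK}{\delta_0}$ and $\sum_{k\le K'}\sum_h\sum_{s,a}\frac{\mathbb 1(\mathcal G_k)q^{\pi^k}(s,a,h)}{\sqrt{N_h^k(s,a)\vee1}}\le6H|\mathcal S||\mathcal A|+2H\sqrt{|\mathcal S||\mathcal A|K'_{\mathcal G}}+2H|\mathcal S||\mathcal A|\ln K'_{\mathcal G}+5\ln\frac{2HK}{\delta_0}$; $\mathcal E_\Omega$ uses $\mathcal G_k=\Omega$, $\mathcal E_0$ uses $\mathcal G_k=\{V_1^{\pi^0}(\mu;\underline c^k,\hat P^k)\ge(\tau+c^0)/2\}$. $\mathcal E$ is the event that for all $k,h,s,s',a$: $|r_h(s,a)-\hat r_h^k(s,a)|\le\beta_h^k(s,a)$, $|c_h(s,a)-\hat c_h^k(s,a)|\le\beta_h^k(s,a)$, $|\hat P_h^k(s'\mid s,a)-P_h(s'\mid s,a)|\le\beta_h^k(s,a)$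 and $|\hat P_h^k(s'\mid s,a)-P_h(s'\mid s,a)|\le\sqrt{\frac{2P_h(s'\mid s,a)Z}{N_h^k(s,a)\vee1}}+\frac{Z}{3(N_h^k(s,a)\vee1)}$, intersected with $\mathcal E_\Omega(\delta/4)\cap\mathcal E_0(\delta/4)$. *)

From HB Require Import structures.
From mathcomp Require Import all_boot all_order all_algebra.
From mathcomp Require Import reals exp.
Set Implicit Arguments. Unset Strict Implicit. Unset Printing Implicit Defensive.
Import Order.TTheory GRing.Theory Num.Theory.
Local Open Scope ring_scope.

(* Conventions: steps are 0-based, h = 0..H-1 (paper's h = 1..H);
   episodes are 1-based, k = 1..K.  Functions indexed by steps are total
   on nat; only h < H is ever used. *)

Section CMDP.
Variables (R : realType) (S A : finType) (H K : nat).

Definition policy := nat -> S -> A -> R.     (* pi h s a = pi_h(a|s) *)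
Definition kernel := nat -> S -> A -> S -> R. (* P h s a s' = P_h(s'|s,a) *)
Definition sfun := nat -> S -> A -> R.

Definition is_policy (pi : policy) : Prop :=
  forall h s, (h < H)%N -> (forall a, 0 <= pi h s a) /\ \sum_a pi h s a = 1.

Definition is_kernel (P : kernel) : Prop :=
  forall h s a, (h < H)%N -> (forall s', 0 <= P h s a s') /\ \sum_s' P h s a s' = 1.

Definition is_distr (mu : S -> R) : Prop := (forall s, 0 <= mu s) /\ \sum_s mu s = 1.

(* Vrem m s = V_{H-m}^pi(s; g, P') (0-based step H-m), i.e. value with m steps to go *)
Fixpoint Vrem (pi : policy) (g : sfun) (P' : kernel) (m : nat) (s : S) : R :=
  match m with
  | 0 => 0
  | m'.+1 => let h := (H - m'.+1)%N in
      \sum_a pi h s a * (g h s a + \sum_s' P' h s a s' * Vrem pi g P' m' s')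
  end.

Definition V1mu (mu : S -> R) (pi : policy) (g : sfun) (P' : kernel) : R :=
  \sum_s mu s * Vrem pi g P' H s.

(* occupancy measure q^pi(s,a,h) = P(S_h = s, A_h = a) under true P from mu *)
Fixpoint dstate (mu : S -> R) (pi : policy) (P : kernel) (h : nat) : S -> R :=
  match h with
  | 0 => mu
  | h'.+1 => fun s' => \sum_s \sum_a dstate mu pi P h' s * pi h' s a * P h' s a s'
  end.
Definition occ (mu : S -> R) (pi : policy) (P : kernel) (h : nat) (s : S) (a : A) : R :=
  dstate mu pi P h s * pi h s a.

Variables (St : nat -> nat -> S) (At : nat -> nat -> A) (Rw Cs : nat -> nat -> R).

Definition visit (j h : nat) (s : S) (a : A) : bool := (St j h == s) && (At j h == a).

Definition Ncnt (k h : nat) (s : S) (a : A) : nat := \sum_(1 <= j < k) visit j h s a.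
Definition Nv (k h : nat) (s : S) (a : A) : R := Num.max ((Ncnt k h s a)%:R) 1.

Definition Phat (k : nat) : kernel := fun h s a s' =>
  (\sum_(1 <= j < k) (visit j h s a && (St j h.+1 == s'))%:R) / Nv k h s a.
Definition rhat (k : nat) : sfun := fun h s a =>
  (\sum_(1 <= j < k | visit j h s a) Rw j h) / Nv k h s a.
Definition chat (k : nat) : sfun := fun h s a =>
  (\sum_(1 <= j < k | visit j h s a) Cs j h) / Nv k h s a.

Variable delta : R.
Definition Zc : R := ln (16 * (#|S|%:R) ^+ 2 * #|A|%:R * H%:R * K%:R / delta).
Definition beta (k : nat) : sfun := fun h s a => Num.sqrt (Zc / Nv k h s a).
Definition bonus (k : nat) : sfun := fun h s a => (1 + H%:R * #|S|%:R) * beta k h s a.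

Definition rtilde (k : nat) : sfun := fun h s a => rhat k h s a + bonus k h s a.
Definition ctilde (k : nat) : sfun := fun h s a => chat k h s a - bonus k h s a.
Definition cund   (k : nat) : sfun := fun h s a => chat k h s a + bonus k h s a.

Variable mu : S -> R.
Definition hatVr (k : nat) (pi : policy) : R :=
  Num.min H%:R (V1mu mu pi (rtilde k) (Phat k)).
Definition hatVc (k : nat) (pi : policy) : R :=
  Num.max 0 (V1mu mu pi (ctilde k) (Phat k)).

Definition deltap : R := delta / (16 * (#|S|%:R) ^+ 2 * #|A|%:R * H%:R).
Definition epsk (k : nat) : R :=
  5 * (H%:R) ^+ 2 * Num.sqrt ((#|S|%:R) ^+ 3 * #|A|%:R) * (ln (k%:R / deltap) + 1)
    / Num.sqrt (k%:R * ln (k%:R / deltap)).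

Variables (tau c0 : R).

Definition Cpp_prop (m : nat) : Prop :=
  forall k, (m <= k)%N -> epsk k <= (tau - c0) / 2.
Definition is_Cpp (C : nat) : Prop :=
  (1 <= C)%N /\ Cpp_prop C /\ forall m, (1 <= m)%N -> (m < C)%N -> ~ Cpp_prop m.

Variable pis : nat -> policy.

(* lamf n = lambda^{n+1} *)
Fixpoint lamf (n : nat) : R :=
  match n with
  | 0 => 0
  | n'.+1 => Num.max 0 (lamf n' + hatVc n'.+1 (pis n'.+1) + epsk n'.+1 - tau)
  end.
Definition lam (k : nat) : R := lamf k.-1.
Definition eta (k : nat) : R := (tau - c0) * H%:R * Num.sqrt k%:R.
Definition lagr (k : nat) (pi : policy) : R :=
  hatVr k pi - lam k / eta k * (hatVc k pi - tau).

Definition is_OptPessPD : Prop :=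
  forall k, (1 <= k <= K)%N ->
    is_policy (pis k) /\
    forall pi, is_policy pi -> lagr k pi <= lagr k (pis k).

Variable P : kernel.
Variables (r c : sfun).

Definition event_G (G : nat -> bool) (delta0 : R) : Prop :=
  forall K', (1 <= K' <= K)%N ->
    let KG : R := (\sum_(1 <= k < K'.+1) G k)%N%:R in
    \sum_(1 <= k < K'.+1) \sum_(h < H) \sum_s \sum_a
        (G k)%:R * occ mu (pis k) P h s a / Nv k h s a
      <= 4 * H%:R * #|S|%:R * #|A|%:R + 2 * H%:R * #|S|%:R * #|A|%:R * ln KG
         + 4 * ln (2 * H%:R * K%:R / delta0)
    /\
    \sum_(1 <= k < K'.+1) \sum_(h < H) \sum_s \sum_a
        (G k)%:R * occ mu (pis k) P h s a / Num.sqrt (Nv k h s a)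
      <= 6 * H%:R * #|S|%:R * #|A|%:R + 2 * H%:R * Num.sqrt (#|S|%:R * #|A|%:R * KG)
         + 2 * H%:R * #|S|%:R * #|A|%:R * ln KG + 5 * ln (2 * H%:R * K%:R / delta0).

Variable pi0 : policy.
Definition G0 (k : nat) : bool :=
  (tau + c0) / 2 <= V1mu mu pi0 (cund k) (Phat k).

Definition goodE : Prop :=
  (forall k h s a s', (1 <= k <= K)%N -> (h < H)%N ->
     [/\ `|r h s a - rhat k h s a| <= beta k h s a,
         `|c h s a - chat k h s a| <= beta k h s a,
         `|Phat k h s a s' - P h s a s'| <= beta k h s a &
         `|Phat k h s a s' - P h s a s'| <=
            Num.sqrt (2 * P h s a s' * Zc / Nv k h s a) + Zc / (3 * Nv k h s a)])
  /\ event_G (fun _ => true) (delta / 4)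
  /\ event_G G0 (delta / 4).

End CMDP.

From HB Require Import structures.
From mathcomp Require Import all_boot all_order all_algebra.
From mathcomp Require Import reals exp.
From mathcomp Require Import ring lra zify.

Set Implicit Arguments.
Unset Strict Implicit.
Unset Printing Implicit Defensive.
Import Order.TTheory GRing.Theory Num.Theory.
Local Open Scope ring_scope.

(* The pessimistic cost [ĉ^k - (1 + H|S|) β] absorbs both estimation errors:
   [β] pays for the cost error, and [H|S| β] pays for the transition error,
   since the true value function takes values in [0, H]. A backward induction
   over the remaining steps then shows that the estimated value under the
   pessimistic cost never exceeds the true value. *)

Lemma sum_mul_le_perturbed (R : realFieldType) (T : finType)
    (p q v : T -> R) (b M : R) :
  (forall t, `|p t - q t| <= b) -> (forall t, 0 <= v t <= M) ->
  \sum_t p t * v t <= \sum_t q t * v t + #|T|%:R * (b * M).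
Proof.
move=> hpq hv; rewrite mulr_natl -sumr_const -big_split /=; apply: ler_sum => t _.
have /andP[v0 vM] := hv t.
have b0 : 0 <= b by apply: le_trans (hpq t); exact: normr_ge0.
have : (p t - q t) * v t <= b * M.
  apply: le_trans (_ : b * v t <= _); last exact: ler_wpM2l.
  by apply: ler_wpM2r => //; apply: le_trans (ler_norm _) (hpq t).
lra.
Qed.

Lemma convex_sum_le (R : realFieldType) (T : finType) (p v : T -> R) (M : R) :
  (forall t, 0 <= p t) -> \sum_t p t = 1 -> (forall t, v t <= M) ->
  \sum_t p t * v t <= M.
Proof.
move=> p_ge0 p_sum1 vM; apply: le_trans (_ : \sum_t p t * M <= _).
  by apply: ler_sum => t _; exact: ler_wpM2l.
by rewrite -mulr_suml p_sum1 mul1r.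
Qed.

Section ValueComparison.
Variables (R : realType) (S A : finType) (H : nat).
Variables (pi : policy R S A) (P : kernel R S A) (g : sfun R S A).
Hypothesis pi_policy : is_policy H pi.
Hypothesis P_kernel : is_kernel H P.
Hypothesis g_unit : forall h s a, (h < H)%N -> 0 <= g h s a <= 1.

Lemma Vrem_bounds m s : (m <= H)%N -> 0 <= Vrem H pi g P m s <= m%:R.
Proof.
elim: m s => [|m IH] s hm /=; first by rewrite lexx.
have hlt : (H - m.+1 < H)%N by lia.
have [pi_ge0 pi_sum1] := pi_policy s hlt.
have [Vge0 Vle_m] : (forall s', 0 <= Vrem H pi g P m s') /\
                   (forall s', Vrem H pi g P m s' <= m%:R).
  by split=> s'; have /andP[] := IH s' (ltnW hm).
apply/andP; split.
  apply: sumr_ge0 => a _; apply: mulr_ge0 => //.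
  have [P_ge0 _] := P_kernel s a hlt.
  have /andP[g0 _] := g_unit s a hlt.
  by apply: addr_ge0 => //; apply: sumr_ge0 => s' _; exact: mulr_ge0.
apply: convex_sum_le pi_ge0 pi_sum1 _ => a.
have [P_ge0 P_sum1] := P_kernel s a hlt.
have /andP[_ g1] := g_unit s a hlt.
have := convex_sum_le P_ge0 P_sum1 Vle_m.
rewrite -natr1; lra.
Qed.

Variables (P' : kernel R S A) (g' b : sfun R S A).
Hypothesis P'_ge0 : forall h s a s', (h < H)%N -> 0 <= P' h s a s'.
Hypothesis P'_close :
  forall h s a s', (h < H)%N -> `|P' h s a s' - P h s a s'| <= b h s a.
Hypothesis g'_pessimistic :
  forall h s a, (h < H)%N -> g' h s a + H%:R * #|S|%:R * b h s a <= g h s a.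

Lemma Vrem_le_of_pessimistic m s :
  (m <= H)%N -> Vrem H pi g' P' m s <= Vrem H pi g P m s.
Proof.
elim: m s => [|m IH] s hm //=.
have hlt : (H - m.+1 < H)%N by lia.
have [pi_ge0 _] := pi_policy s hlt.
apply: ler_sum => a _; apply: ler_wpM2l => //.
set h := (H - m.+1)%N.
have V_range s' : 0 <= Vrem H pi g P m s' <= H%:R.
  have /andP[V0 Vm] := Vrem_bounds s' (ltnW hm).
  by rewrite V0 (le_trans Vm) // ler_nat ltnW.
have next_le : \sum_s' P' h s a s' * Vrem H pi g' P' m s'
               <= \sum_s' P h s a s' * Vrem H pi g P m s' + H%:R * #|S|%:R * b h s a.
  rewrite (_ : H%:R * _ * _ = #|S|%:R * (b h s a * H%:R)); last by ring.
  apply: le_trans (sum_mul_le_perturbed (P'_close s a ^~ hlt) V_range).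
  apply: ler_sum => s' _; apply: ler_wpM2l; first exact: P'_ge0.
  exact: IH (ltnW hm).
have := g'_pessimistic s a hlt; lra.
Qed.

End ValueComparison.

Lemma max0_V1mu_le (R : realType) (S A : finType) (H : nat) (mu : S -> R)
    (pi pi' : policy R S A) (g g' : sfun R S A) (P P' : kernel R S A) :
  is_distr mu ->
  (forall s, Vrem H pi' g' P' H s <= Vrem H pi g P H s) ->
  (forall s, 0 <= Vrem H pi g P H s) ->
  Num.max 0 (V1mu H mu pi' g' P') <= V1mu H mu pi g P.
Proof.
move=> [mu_ge0 _] hle hge0; rewrite ge_max; apply/andP; split.
  by apply: sumr_ge0 => s _; exact: mulr_ge0.
by apply: ler_sum => s _; exact: ler_wpM2l.
Qed.

Lemma ctilde_pessimistic (R : realType) (S A : finType) (H K : nat)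
    (St : nat -> nat -> S) (At : nat -> nat -> A) (Cs : nat -> nat -> R)
    (delta : R) (c : sfun R S A) k h s a :
  `|c h s a - chat St At Cs k h s a| <= beta H K St At delta k h s a ->
  ctilde H K St At Cs delta k h s a
    + H%:R * #|S|%:R * beta H K St At delta k h s a <= c h s a.
Proof. rewrite /ctilde /bonus ler_norml => /andP[hc _]; lra. Qed.

Lemma Phat_ge0 (R : realType) (S A : finType)
    (St : nat -> nat -> S) (At : nat -> nat -> A) k h s a s' :
  0 <= Phat R St At k h s a s'.
Proof.
apply: divr_ge0; first by apply: sumr_ge0 => j _; exact: ler0n.
by rewrite /Nv le_max ler01 orbT.
Qed.

Theorem lemmaC1
  (R : realType) (S A : finType) (H K : nat)
  (P : kernel R S A) (r c : sfun R S A) (mu : S -> R)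
  (tau delta c0 : R) (pi0 : policy R S A)
  (St : nat -> nat -> S) (At : nat -> nat -> A) (Rw Cs : nat -> nat -> R)
  (pis : nat -> policy R S A) (Cpp : nat) :
  (1 <= H)%N ->
  @is_kernel R S A H P ->
  (forall h s a, (h < H)%N -> 0 <= r h s a <= 1 /\ 0 <= c h s a <= 1) ->
  @is_distr R S mu ->
  0 < tau <= H%:R ->
  0 < delta < 1 ->
  @is_policy R S A H pi0 ->
  @V1mu R S A H mu pi0 c P = c0 ->
  c0 < tau ->
  @is_Cpp R S A H delta tau c0 Cpp ->
  @is_OptPessPD R S A H K St At Rw Cs delta mu tau c0 pis ->
  @goodE R S A H K St At Rw Cs delta mu tau c0 pis P r c pi0 ->
  forall k : nat, (Cpp <= k <= K)%N ->
  forall pi : policy R S A, @is_policy R S A H pi ->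
    @hatVc R S A H K St At Cs delta mu k pi <= @V1mu R S A H mu pi c P.
Proof.
move=> _ hP hrc hmu _ _ _ _ _ [Cpp1 _] _ [hgood _] k /andP[Ck kK] pi hpi.
have k_range : (1 <= k <= K)%N by rewrite kK (leq_trans Cpp1 Ck).
have c_unit h s a : (h < H)%N -> 0 <= c h s a <= 1 by move=> hh; case: (hrc h s a hh).
apply: max0_V1mu_le => // s; last first.
  by have /andP[] := Vrem_bounds hpi hP c_unit s (leqnn H).
apply: (Vrem_le_of_pessimistic (b := beta H K St At delta k) hpi hP c_unit
         (fun h s a s' _ => @Phat_ge0 R _ _ St At k h s a s')); last exact: leqnn.
  by move=> h s0 a s' /(hgood k h s0 a s' k_range)[].
move=> h s0 a /(hgood k h s0 a s0 k_range)[_ hc _ _].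
exact: ctilde_pessimistic.
Qed.
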